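(* For any choice of the almost disjoint family $\mathcal{A}$ and of the enumeration of $X$ in its definition, $\rho^{[0,1]}$ is a partition regular function and $\mathcal{I}_{\rho^{[0,1]}}=\mathrm{conv}$.
   Context: $\mathrm{conv}$ is the ideal on $\mathbb{Q}\cap[0,1]$ of all sets covered by the ranges of finitely many sequences in $\mathbb{Q}\cap[0,1]$ convergent in $[0,1]$. Definition of $\rho^{[0,1]}$: let $\mathcal{A}=\{A_\alpha:\alpha<\mathfrak{c}\}$ be an almost disjoint family on $\omega$ (pairwise distinct infinite subsets of $\omega$ with pairwise finite intersections). Let $X$ be the set of all $x\colon\omega\times\omega\to[0,1]\cap\mathbb{Q}$ such that: (i) for every $p\in[0,1]$ there is an open neighborhood $U$ of $p$ with $x[(\omega\setminus[0,n])\times\omega]\not\subseteq U$ for all $n\in\omega$; (ii) $x$ is injective; (iii) $x[(\omega\setminus[0,n])\times\omega]\notin\mathrm{conv}$ for all $n$. Fix an enumeration $X=\{x_\alpha:\alpha<\mathfrak{c}\}$. Let $\overline{\mathcal{A}}=\{A\setminus K:A\in\mathcal{A},K\in[\omega]^{<\omega}\}$ and $\rho^{[0,1]}\colon\overline{\mathcal{A}}\to[[0,1]\cap\mathbb{Q}]^\omega$, $\rho^{[0,1]}(A_\alpha\setminus K)=x_\alpha[(\omega\setminus[0,\max(A_\alpha\cap K)])\times\omega]$, with the convention $\max\emptyset=0$. Here $[0,m]$ denotes $\{0,1,\dots,m\}$. Partition regular function: $\Lambda,\Omega$ countably infinite, $\mathcal{F}$ a nonempty family of infinite subsets of $\Omega$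 with $F\setminus K\in\mathcal{F}$ for $F\in\mathcal{F}$, $K$ finite; $\rho\colon\mathcal{F}\to[\Lambda]^\omega$ is partition regular if (M) $E\subseteq F\Rightarrow\rho(E)\subseteq\rho(F)$; (R) if $F\in\mathcal{F}$ and $\rho(F)=A\cup B$ then some $E\in\mathcal{F}$ has $\rho(E)\subseteq A$ or $\rho(E)\subseteq B$; (S) for every $E\in\mathcal{F}$ there is $F\in\mathcal{F}$, $F\subseteq E$, such that every $a\in\rho(F)$ satisfies $a\notin\rho(F\setminus K)$ for some finite $K\subseteq\Omega$. $\mathcal{I}_\rho=\{A\subseteq\Lambda:\forall F\in\mathcal{F}\ \rho(F)\not\subseteq A\}$. *)

From HB Require Import structures.
From mathcomp Require Import all_boot all_order all_algebra.
From mathcomp Require Import all_classical all_reals all_analysis.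
Set Implicit Arguments. Unset Strict Implicit. Unset Printing Implicit Defensive.
Import Order.TTheory GRing.Theory Num.Theory.
Import numFieldNormedType.Exports.
Local Open Scope classical_set_scope.
Local Open Scope ring_scope.

Definition Lam := {q : rat | (0 <= q <= 1)%R}.

(* Partition regular functions rho : F -> [Lam]^omega, F a family of
   subsets of Om.  rho is a total function on set Om, only its values on
   members of F matter. *)
Definition partition_regular {L Om : Type} (F : set (set Om))
  (rho : set Om -> set L) : Prop :=
  (exists E, F E) /\
  (forall E, F E -> infinite_set E) /\
  (forall E K, F E -> finite_set K -> F (E `\` K)) /\
  (forall E, F E -> infinite_set (rho E)) /\
  (forall E G, F E -> F G -> E `<=` G -> rho E `<=` rho G) /\
  (forall G (A B : set L), F G -> rho G = A `|` B ->
     exists E, F E /\ (rho E `<=` A \/ rho E `<=` B)) /\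
  (forall E, F E -> exists G, F G /\ G `<=` E /\
     forall a, rho G a -> exists K : set Om, finite_set K /\ ~ rho (G `\` K) a).

Definition I_rho {L Om : Type} (F : set (set Om)) (rho : set Om -> set L)
  : set (set L) :=
  fun B => forall E, F E -> ~ (rho E `<=` B).

Definition conv01 (R : realType) : set (set Lam) :=
  fun B => exists (k : nat) (s : nat -> nat -> Lam),
    (forall i, (i < k)%N -> exists l : R, 0 <= l <= 1 /\
        (fun n => (ratr (val (s i n)) : R)) @ \oo --> l) /\
    (forall q, B q -> exists i, (i < k)%N /\ exists n, s i n = q).

Definition tail_image (x : nat -> nat -> Lam) (n : nat) : set Lam :=
  fun q => exists i j, (n < i)%N /\ x i j = q.

Definition inX (R : realType) (x : nat -> nat -> Lam) : Prop :=
  (forall p : R, 0 <= p <= 1 -> exists U : set R, open U /\ U p /\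
      forall n, ~ (forall q, tail_image x n q -> U (ratr (val q)))) /\
  injective (fun ij : nat * nat => x ij.1 ij.2) /\
  (forall n, ~ conv01 R (tail_image x n)).

(* almost disjoint family {A_a : a < c}, indexed by R (|R| = c) *)
Definition almost_disjoint_family (R : realType) (A : R -> set nat) : Prop :=
  injective A /\ (forall a, infinite_set (A a)) /\
  (forall a b, a <> b -> finite_set (A a `&` A b)).

Definition enumeration_of_X (R : realType) (x : R -> nat -> nat -> Lam) : Prop :=
  (forall a, inX R (x a)) /\ injective x /\
  (forall y, inX R y -> exists a, x a = y).

Definition Abar (R : realType) (A : R -> set nat) : set (set nat) :=
  fun E => exists a (K : set nat), finite_set K /\ E = A a `\` K.

(* rho^{[0,1]}(A_a \ K) = x_a[(omega \ [0, max(A_a ∩ K)]) x omega], max ∅ = 0: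
   i ∉ [0, max(A_a ∩ K)] iff 0 < i and every k ∈ A_a ∩ K is < i. *)
Definition rho01 (R : realType) (A : R -> set nat) (x : R -> nat -> nat -> Lam)
  : set nat -> set Lam :=
  fun E q => exists a (K : set nat), finite_set K /\ E = A a `\` K /\
    exists i j, (0 < i)%N /\ (forall k, A a k -> K k -> (k < i)%N) /\ x a i j = q.

(* A set S of rationals in [0,1] lies in conv iff it has only finitely many
   accumulation points: the range of a convergent sequence accumulates only at
   its limit, and conversely, around each of finitely many accumulation points
   the points of S can be enumerated by one sequence converging to it, while
   only finitely many points of S stay away from all of them.
   Hence a set B outside conv has infinitely many accumulation points
   q 0, q 1, ..., and B contains an injective double sequence y whose columns
   0 and 1 stay near q 0 and q 1 and whose row i converges to q (i + 2); such
   a y satisfies (i)-(iii), so it is some x_b and rho(A_b) is contained in B.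
   As every value of rho contains a tail of some x_a, which is not in conv,
   this gives both I_rho = conv and property (R); (M) and (S) come from almost
   disjointness of the A_a and injectivity of the x_a. *)

From mathcomp Require Import all_boot all_order all_algebra.
From mathcomp Require Import all_classical all_reals all_analysis.
From mathcomp Require Import zify lra.
Set Implicit Arguments. Unset Strict Implicit. Unset Printing Implicit Defensive.
Import Order.TTheory GRing.Theory Num.Theory.
Import numFieldNormedType.Exports.
Local Open Scope classical_set_scope.
Local Open Scope ring_scope.

Lemma finite_nat_bounded (K : set nat) : finite_set K -> exists N, K `<=` `I_N.
Proof.
move=> /finite_seqP[l ->]; exists (\max_(k <- l) k).+1 => k /= kl.
by rewrite ltnS; apply: leq_bigmax_seq.
Qed.

Lemma injective_choice (T : eqType) (B : nat -> set T) :
  (forall n, infinite_set (B n)) -> exists z : nat -> T, injective z /\ forall n, B n (z n).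
Proof.
move=> Binf.
have /choice[f fP] : forall nl : nat * seq T, exists t, B nl.1 t /\ t \notin nl.2.
  move=> [n l]; have [t [Bt tl]] := infinite_setN0 (infinite_setD (Binf n) (finite_seq l)).
  by exists t; split => //; apply/negP.
pose pre := fix pre n := if n is m.+1 then rcons (pre m) (f (m, pre m)) else [::].
have preE n : pre n = [seq f (k, pre k) | k <- iota 0 n].
  by elim: n => // n IH; rewrite [LHS]/= {1}IH -cats1 -addn1 iotaD map_cat.
have fresh m n : (m < n)%N -> f (m, pre m) != f (n, pre n).
  move=> mn; apply: contraNneq (fP (n, pre n)).2 => <-.
  by rewrite /= [pre n]preE (map_f (fun k => f (k, pre k))) // mem_iota.
exists (fun n => f (n, pre n)); split => [m n /= fmn|n]; last exact: (fP (n, pre n)).1.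
by case: (ltngtP m n) => // /fresh; rewrite fmn eqxx.
Qed.

Lemma infinite_countable_enum (T : countType) (S : set T) : infinite_set S ->
  exists e : nat -> T,
    range e = S /\ forall F, finite_set F -> \forall n \near \oo, ~ F (e n).
Proof.
move=> Sinf.
have /choice[w wP] : forall n, exists t, S t /\ (n <= choice.pickle t)%N.
  move=> n; apply: contrapT => nw; apply: Sinf.
  apply: (@sub_finite_set _ _ (choice.pickle @^-1` `I_n)).
    move=> t St /=; rewrite ltnNge; apply/negP => nt; apply: nw; by exists t.
  apply: (finite_preimage _ (finite_II n)) => a b _ _.
  exact: (pcan_inj (@choice.pickleK T)).
(* e n is the element coded by n if it lies in S, and otherwise an element of
   S with code at least n; either way the code of e n tends to infinity. *)
pose e n :=
  if choice.pickle_inv n is Some t then (if `[< S t >] then t else w n) else w n.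
have eS n : S (e n) /\ (n <= choice.pickle (e n))%N.
  rewrite /e; case en: (choice.pickle_inv n) => [t|]; last exact: wP.
  case: asboolP => St; last exact: wP.
  by split => //; have /= := @choice.pickle_invK T n; rewrite en /= => ->.
exists e; split.
  apply/seteqP; split => [_ [n _ <-]|t St]; first exact: (eS n).1.
  by exists (choice.pickle t) => //; rewrite /e choice.pickleK_inv; case: asboolP.
move=> F /(finite_image choice.pickle) /finite_nat_bounded[N FN].
near=> n => Fen; have := FN _ (ex_intro2 _ _ _ Fen erefl); rewrite /= ltnNge.
by rewrite (leq_trans _ (eS n).2) //; near: n; exact: nbhs_infty_ge.
Unshelve. all: by end_near. Qed.

Lemma finite_set_dist_gt0 (R : realType) (F : set R) (p : R) : finite_set F -> ~ F p ->
  exists2 e, 0 < e & forall q, F q -> e <= `|q - p|.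
Proof.
move=> Ffin Fp.
have Fcl : closed F.
  apply: accessible_finite_set_closed.1 Ffin.
  by apply: hausdorff_accessible; exact: norm_hausdorff.
have /nbhs_ballP[e e0 epF] : nbhs p (~` F).
  by apply: open_nbhs_nbhs; split => //; exact: closed_openC.
exists e => // q Fq; rewrite distrC leNgt; apply/negP => pqe.
by apply: (epF q) => //; rewrite -ball_normE.
Qed.

Definition toR {R : realType} (q : Lam) : R := ratr (val q).

Lemma toR_inj (R : realType) : injective (@toR R).
Proof. by move=> q q' /fmorph_inj /val_inj. Qed.

Lemma toR_itv (R : realType) (q : Lam) : 0 <= (toR q : R) <= 1.
Proof.
rewrite /toR; have /andP[q0 q1] := valP q.
by rewrite -(rmorph0 (@ratr R)) -(rmorph1 (@ratr R)) !ler_rat q0 q1.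
Qed.

Lemma conv01S (R : realType) (B C : set Lam) : C `<=` B -> conv01 R B -> conv01 R C.
Proof. by move=> CB [k [s [sl Bs]]]; exists k, s; split => // q /CB /Bs. Qed.

Lemma conv01U (R : realType) (B C : set Lam) :
  conv01 R B -> conv01 R C -> conv01 R (B `|` C).
Proof.
move=> [k [s [sl Bs]]] [k' [s' [sl' Cs']]].
exists (k + k')%N, (fun i => if (i < k)%N then s i else s' (i - k)%N); split.
  move=> i ikk'; case: ifP => ik; first exact: sl.
  by apply: sl'; lia.
move=> q [/Bs [i [ik sq]]|/Cs' [i [ik s'q]]]; first by exists i; rewrite ik; split => //; lia.
by exists (k + i)%N; split; [lia|rewrite ltnNge leq_addr addKn].
Qed.

Lemma conv01_finite (R : realType) (B : set Lam) : finite_set B -> conv01 R B.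
Proof.
move=> /finite_seqP[l ->]; pose q0 : Lam := exist _ 0 isT.
exists (size l), (fun i _ => nth q0 l i); split.
  by move=> i _; exists (toR (nth q0 l i)); split; [exact: toR_itv|exact: cvg_cst].
move=> q /= ql; exists (index q l); rewrite index_mem ql.
by split => //; exists 0%N; rewrite nth_index.
Qed.

Lemma conv01_range (R : realType) (s : nat -> Lam) (l : R) :
  (fun n => toR (s n)) @ \oo --> l -> conv01 R (range s).
Proof.
move=> sl; exists 1%N, (fun _ => s); split.
  2: by move=> _ [n _ <-]; exists 0%N; split => //; exists n.
move=> _ _; exists l; split => //.
have : l \in `[0, 1].
  apply: (@closed_cvg _ _ _ _ _ [set x : R | x \in `[0, 1]] _ _ _ sl).
    exact: interval_closed.
  by apply: nearW => n; rewrite /= in_itv toR_itv.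
by rewrite in_itv.
Qed.

Definition near_pts (R : realType) (S : set Lam) (p e : R) : set Lam :=
  [set s | S s /\ `|toR s - p| < e].

Definition acc_points {R : realType} (S : set Lam) : set R :=
  [set p | forall e, 0 < e -> infinite_set (near_pts S p e)].

Section AccumulationPoints.
Variable R : realType.
Implicit Types (S T : set Lam) (p q l : R) (s : nat -> Lam).

Lemma acc_pointsS S T : S `<=` T -> @acc_points R S `<=` acc_points T.
Proof.
move=> ST p Sp e e0; apply: sub_infinite_set (Sp e e0) => s [/ST Ts sp]; by split.
Qed.

Lemma acc_pointsU S T : @acc_points R (S `|` T) `<=` acc_points S `|` acc_points T.
Proof.
move=> p STp; apply: contrapT => /not_orP[/existsNP[e /not_implyP[e0 /contrapT Se]]].
move=> /existsNP[e' /not_implyP[e'0 /contrapT Te']].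
have m0 : 0 < Num.min e e' by rewrite lt_min e0 e'0.
apply: (STp _ m0); apply: (@sub_finite_set _ _ (near_pts S p e `|` near_pts T p e')).
  by move=> s [[Ss|Ts]]; rewrite lt_min => /andP[se se']; [left|right].
by rewrite finite_setU.
Qed.

Lemma acc_points_bigcup (F : nat -> set Lam) k :
  @acc_points R (\bigcup_(i < k) F i) `<=` \bigcup_(i < k) acc_points (F i).
Proof.
elim: k => [p /(_ 1 ltr01)[]|k IH p].
  by apply: (sub_finite_set _ (finite_set0 _)) => s [[]].
have Fsplit : \bigcup_(i < k.+1) F i `<=` \bigcup_(i < k) F i `|` F k.
  move=> s [i /= ik Fis]; case: (ltnP i k) => ki; first by left; exists i.
  by right; have <- : i = k by lia.
move=> /(acc_pointsS Fsplit) /acc_pointsU[/IH[i /= ik]|] Fp.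
  by exists i => //=; lia.
by exists k => //=.
Qed.

Lemma acc_points_range_cvg s l :
  (fun n => toR (s n)) @ \oo --> l -> acc_points (range s) `<=` [set l].
Proof.
move=> sl q qacc; apply: contrapT => ql.
have d0 : 0 < `|q - l| / 2 by rewrite divr_gt0 // normr_gt0 subr_eq0; apply/eqP.
have [N _ sN] := cvgr_dist_lt _ _ sl _ d0.
apply: (qacc _ d0); apply: (sub_finite_set _ (finite_image s (finite_II N))).
move=> _ [[n _ <-] snq]; exists n => //=; rewrite ltnNge; apply/negP => /sN sln.
rewrite distrC in snq; rewrite distrC in sln.
have := ler_distD (toR (s n)) q l; lra.
Qed.

Lemma acc_points_range_inj_cvg s l : injective s ->
  (fun n => toR (s n)) @ \oo --> l -> acc_points (range s) l.
Proof.
move=> sinj sl e e0 near_fin; have [N _ sN] := cvgr_dist_lt _ _ sl _ e0.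
have : finite_set (s @^-1` near_pts (range s) l e).
  by apply: finite_preimage near_fin => m n _ _ /sinj.
apply/(sub_infinite_set (A := ~` `I_N)); last first.
  by rewrite -setTD; apply: infinite_setD infinite_nat (finite_II N).
move=> n /= /negP; rewrite -leqNgt => /sN sln; split; first exact: imageT.
by rewrite distrC.
Qed.

Lemma acc_points_near_pts S p e q : acc_points (near_pts S p e) q -> `|q - p| <= e.
Proof.
move=> qacc; rewrite leNgt; apply/negP => qpe.
have d0 : 0 < `|q - p| - e by rewrite subr_gt0.
have /infinite_setN0[s [[_ spe] sqd]] := qacc _ d0.
rewrite distrC in sqd; have := ler_distD (toR s) q p; lra.
Qed.

Lemma infinite_acc_points_nonempty S : infinite_set S -> @acc_points R S !=set0.
Proof.
move=> Sinf.
have Einf : infinite_set (toR @` S : set R).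
  move=> Efin; apply: Sinf; apply: sub_finite_set (finite_preimage _ Efin).
    by move=> s Ss; exists s.
  by move=> ? ? _ _ /toR_inj.
have Ebnd : bounded_set (toR @` S : set R).
  rewrite /= /bounded_near; near=> M => _ [s _ <-]; have /andP[s0 s1] := toR_itv R s.
  by rewrite /= ger0_norm // (le_trans s1) //; near: M; exact: nbhs_pinfty_ge.
have [p /limit_point_infinite_setP pE] := infinite_bounded_limit_point_nonempty Einf Ebnd.
exists p => e e0 near_fin; apply: (pE (ball p e)); first exact: nbhsx_ballx.
apply: sub_finite_set (finite_image toR near_fin) => x [px [s Ss sx]].
by exists s => //; split => //; move: px; rewrite -ball_normE /= sx distrC.
Unshelve. all: by end_near. Qed.

End AccumulationPoints.

Section ConvAccumulation.
Variable R : realType.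
Implicit Types (S : set Lam) (p : R).

Lemma conv01_acc_points_finite S : conv01 R S -> finite_set (@acc_points R S).
Proof.
move=> [k [s [sl Ss]]].
have /choice[l lP] :
    forall i, exists l : R, (i < k)%N -> (fun n => toR (s i n)) @ \oo --> l.
  move=> i; case: (ltnP i k) => ik; last by exists 0.
  by have [l [_ sil]] := sl i ik; exists l.
have SF : S `<=` \bigcup_(i < k) range (s i).
  by move=> q /Ss[i [ik [n <-]]]; exists i => //; exists n.
apply: (sub_finite_set _ (finite_image l (finite_II k))).
move=> p /(acc_pointsS SF) /acc_points_bigcup[i ik /(acc_points_range_cvg (lP i ik)) ->].
by exists i.
Qed.

Lemma conv01_single S p : acc_points S `<=` [set p] -> conv01 R S.
Proof.
move=> Sp; have [Sfin|Sinf] := pselect (finite_set S); first exact: conv01_finite.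
have [e [eS e_fin]] := infinite_countable_enum Sinf.
apply: (@conv01S _ (range e)); first by rewrite eS.
apply: (@conv01_range _ _ p); apply/cvgrPdist_lt => d d0.
have far_fin : finite_set (S `\` near_pts S p d).
  apply: contrapT => /(@infinite_acc_points_nonempty R)[q qfar].
  have qp := Sp _ (acc_pointsS (@subDsetl _ S _) qfar); rewrite qp in qfar.
  apply: (qfar _ d0); apply: (sub_finite_set _ (finite_set0 _)).
  by move=> s [[Ss nps] ps]; apply: nps.
apply: filterS (e_fin _ far_fin) => n en; rewrite distrC; apply: contrapT => epd.
by apply: en; split; [rewrite -eS; exact: imageT|move=> []].
Qed.

Lemma conv01_acc_points_seq (L : seq R) S : acc_points S `<=` [set` L] -> conv01 R S.
Proof.
elim: L S => [|p L IH] S SL.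
  apply: conv01_finite; apply: contrapT => /(@infinite_acc_points_nonempty R)[q /SL].
  by rewrite /= in_nil.
(* Near p only p itself can accumulate, as the other candidates in L are at
   distance at least e0 = 2 e from p; far from p, p cannot accumulate. *)
have [e0 e0_gt0 Le0] :
    exists2 e0, 0 < e0 & forall q, ([set` L] `\ p) q -> e0 <= `|q - p|.
  apply: finite_set_dist_gt0; first by apply: finite_setD; exact: finite_seq.
  by move=> [_ []].
pose e := e0 / 2; have e_gt0 : 0 < e by rewrite divr_gt0.
have near_sub : near_pts S p e `<=` S by move=> s [].
rewrite -(setDUK near_sub).
apply: conv01U.
  apply: (conv01_single (p := p)) => q qnear; apply: contrapT => qp.
  have := acc_points_near_pts qnear; have : ([set` L] `\ p) q.
    split => //; move: (SL _ (acc_pointsS near_sub qnear)).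
    by rewrite /= in_cons => /orP[/eqP|].
  move=> /Le0; rewrite /e; lra.
apply: IH => q qfar; have := SL _ (acc_pointsS (@subDsetl _ _ _) qfar).
rewrite /= in_cons => /orP[/eqP qp|//]; rewrite qp in qfar.
exfalso; apply: (qfar _ e_gt0); apply: (sub_finite_set _ (finite_set0 _)).
by move=> s [[Ss nps] ps]; apply: nps.
Qed.

Lemma conv01P S : conv01 R S <-> finite_set (@acc_points R S).
Proof.
split; first exact: conv01_acc_points_finite.
by move=> /finite_seqP[L SL]; apply: (conv01_acc_points_seq (L := L)); rewrite SL.
Qed.

End ConvAccumulation.

(* Columns 0 and 1 keep every tail of the grid out of any ball of radius
   |q 0 - q 1| / 4, giving (i); the row limits q (i + 2) give every tail
   infinitely many accumulation points, giving (iii). *)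
Definition grid_center (R : realType) (q : nat -> R) (i j : nat) : R :=
  if j == 0%N then q 0%N else if j == 1%N then q 1%N else q (i + 2)%N.

Definition grid_radius (R : realType) (q : nat -> R) (j : nat) : R :=
  `|q 0%N - q 1%N| / 4 / j.+1%:R.

Section Grid.
Variables (R : realType) (q : nat -> R) (y : nat -> nat -> Lam).
Hypotheses (q_inj : injective q)
  (y_inj : injective (fun ij : nat * nat => y ij.1 ij.2))
  (y_near : forall i j, `|toR (y i j) - grid_center q i j| < grid_radius q j).

Let D := `|q 0%N - q 1%N|.

Let D_gt0 : 0 < D.
Proof. by rewrite normr_gt0 subr_eq0; apply/eqP => /q_inj. Qed.

Lemma grid_row_cvg i : (fun j => toR (y i j)) @ \oo --> q (i + 2)%N.
Proof.
apply/cvgrPdist_lt => e e0; have D4e : 0 < e / (D / 4) by rewrite !divr_gt0.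
near=> j; have j2 : (1 < j)%N by near: j; exact: nbhs_infty_gt.
have := y_near i j; rewrite /grid_center gtn_eqF ?(ltnW j2) // gtn_eqF //.
rewrite distrC => /lt_le_trans; apply; rewrite /grid_radius -/D.
have : j.+1%:R^-1 < e / (D / 4) by near: j; exact: (near_infty_natSinv_lt (PosNum D4e)).
by rewrite ltr_pdivlMr ?divr_gt0 // mulrC => /ltW.
Unshelve. all: by end_near. Qed.

Lemma grid_acc_points_tail n i : (n < i)%N -> acc_points (tail_image y n) (q (i + 2)%N).
Proof.
move=> ni; apply: (acc_pointsS (S := range (y i))); first by move=> _ [j _ <-]; exists i, j.
apply: acc_points_range_inj_cvg; last exact: grid_row_cvg.
by move=> j j' /(@y_inj (i, j) (i, j')) [].
Qed.

Lemma grid_inX : inX R y.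
Proof.
split; [|split => [[i j] [i' j'] /y_inj //|n]]; last first.
  move=> /conv01P tail_fin; apply: infinite_nat.
  rewrite -(_ : (fun k => q (n.+1 + k + 2)%N) @^-1` acc_points (tail_image y n) = setT).
    by apply: finite_preimage tail_fin => k k' _ _ /q_inj; lia.
  by apply/seteqP; split => // k _; apply: grid_acc_points_tail; lia.
move=> p _; exists (ball p (D / 4)); split; first exact: ball_open.
split; first by apply: ballxx; rewrite divr_gt0.
move=> n tail_ball.
have near_p j : `|p - toR (y n.+1 j)| < D / 4.
  have := tail_ball _ (ex_intro _ n.+1 (ex_intro _ j (conj (ltnSn n) erefl))).
  by rewrite -ball_normE.
have := near_p 0%N; have := near_p 1%N; have := y_near n.+1 0; have := y_near n.+1 1.
rewrite /grid_center /grid_radius -/D /= divr1.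
set y0 := toR (y n.+1 0%N); set y1 := toR (y n.+1 1%N) => q1y1 q0y0 py1 py0.
have := ler_distD y0 (q 0%N) (q 1%N); rewrite -/D (distrC (q 0%N)).
have := ler_distD p y0 (q 1%N); have := ler_distD y1 p (q 1%N).
rewrite !(distrC _ p); have := D_gt0; lra.
Qed.

End Grid.

Lemma not_conv01_inX (R : realType) (S : set Lam) :
  ~ conv01 R S -> exists y, inX R y /\ forall i j, S (y i j).
Proof.
move=> nS; have acc_inf : infinite_set (@acc_points R S) by move=> fin; apply/nS/conv01P.
have [q [q_inj q_acc]] := injective_choice (fun _ => acc_inf).
have D_gt0 : 0 < `|q 0%N - q 1%N| by rewrite normr_gt0 subr_eq0; apply/eqP => /q_inj.
pose ij m := odflt (0, 0)%N (choice.unpickle m).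
pose B m := near_pts S (grid_center q (ij m).1 (ij m).2) (grid_radius q (ij m).2).
have B_inf m : infinite_set (B m).
  apply: (_ : acc_points S _); last by rewrite !divr_gt0.
  by rewrite /grid_center; case: ifP => _; [|case: ifP => _]; exact: q_acc.
have [z [z_inj zB]] := injective_choice B_inf.
have ij_pickle i j : ij (choice.pickle (i, j)) = (i, j) by rewrite /ij choice.pickleK.
exists (fun i j => z (choice.pickle (i, j))).
split; last by move=> i j; case: (zB (choice.pickle (i, j))).
apply: grid_inX q_inj _ _ => [[i j] [i' j'] /z_inj /(pcan_inj (@choice.pickleK _))//|i j].
by case: (zB (choice.pickle (i, j))); rewrite ij_pickle.
Qed.

Section RhoUnitInterval.
Variables (R : realType) (A : R -> set nat) (x : R -> nat -> nat -> Lam).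
Hypotheses (A_ad : almost_disjoint_family A) (x_enum : enumeration_of_X x).

Lemma Abar_A a : Abar A (A a).
Proof. by exists a, set0; rewrite setD0; split => //; exact: finite_set0. Qed.

Lemma Abar_sub_eq a b (K K' : set nat) :
  finite_set K -> A a `\` K `<=` A b `\` K' -> a = b.
Proof.
move=> Kfin sub; apply: contrapT => ab; have [_ [A_inf A_dis]] := A_ad.
apply: (A_inf a); apply: (@sub_finite_set _ _ ((A a `&` A b) `|` K)).
  by move=> k Ak; case: (pselect (K k)) => Kk; [right|left; split => //; case: (sub k)].
by rewrite finite_setU; split => //; exact: A_dis.
Qed.

Lemma x_inj a : injective (fun ij : nat * nat => x a ij.1 ij.2).
Proof. by have [/(_ a) [_ []]] := x_enum. Qed.

Lemma rho01E a (K : set nat) : finite_set K ->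
  rho01 A x (A a `\` K) =
  [set q | exists i j, [/\ (0 < i)%N, forall k, A a k -> K k -> (k < i)%N & x a i j = q]].
Proof.
move=> Kfin; apply/seteqP; split => q; last first.
  by move=> [i [j [i0 iK xq]]]; exists a, K; split => //; split => //; exists i, j.
move=> [b [K' [K'fin [EK' [i [j [i0 [iK' xq]]]]]]]].
have ba : b = a by apply: (Abar_sub_eq (K' := K) K'fin); rewrite -EK'.
subst b; exists i, j; split => // k Ak Kk; apply: iK' => //; apply: contrapT => nK'k.
have : (A a `\` K') k by split.
by rewrite -EK' => -[].
Qed.

Lemma tail_sub_rho01 a (K : set nat) : finite_set K ->
  exists N, tail_image (x a) N `<=` rho01 A x (A a `\` K).
Proof.
move=> Kfin; have [N KN] := finite_nat_bounded Kfin; exists N; rewrite rho01E //.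
move=> _ [i [j [Ni <-]]]; exists i, j; split => //; first lia.
by move=> k _ /KN /=; lia.
Qed.

Lemma rho01_not_conv01 E : Abar A E -> ~ conv01 R (rho01 A x E).
Proof.
move=> [a [K [Kfin ->]]]; have [N /conv01S tail_sub] := tail_sub_rho01 a Kfin.
by have [/(_ a) [_ [_ tail_nc]] _] := x_enum; move=> /tail_sub /tail_nc.
Qed.

Lemma rho01_sub_of_not_conv01 B :
  ~ conv01 R B -> exists2 E, Abar A E & rho01 A x E `<=` B.
Proof.
move=> /not_conv01_inX[y [yX yB]]; have [_ [_ /(_ y yX)[b xb]]] := x_enum.
exists (A b); first exact: Abar_A.
rewrite -(setD0 (A b)) rho01E; last exact: finite_set0.
by move=> _ [i [j [_ _ <-]]]; rewrite xb.
Qed.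

Lemma rho01_mono E G :
  Abar A E -> Abar A G -> E `<=` G -> rho01 A x E `<=` rho01 A x G.
Proof.
move=> [a [K [Kfin ->]]] [b [K' [K'fin ->]]] EG.
have ab := Abar_sub_eq Kfin EG; subst b.
rewrite !rho01E // => _ [i [j [i0 iK <-]]]; exists i, j; split => // k Ak K'k.
by apply: iK => //; apply: contrapT => nKk; have [] := EG k (conj Ak nKk).
Qed.

Lemma rho01_removable E q : Abar A E -> rho01 A x E q ->
  exists K, finite_set K /\ ~ rho01 A x (E `\` K) q.
Proof.
move=> [a [K [Kfin ->]]]; rewrite rho01E // => -[i [j [i0 iK xq]]].
have [k Ak ik] : exists2 k, A a k & (i <= k)%N.
  apply: contrapT => nk; have [_ [A_inf _]] := A_ad; apply: (A_inf a).
  apply: (sub_finite_set _ (finite_II i)) => k Ak /=; rewrite ltnNge; apply/negP => ik.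
  by apply: nk; exists k.
exists [set k]; split; first exact: finite_set1.
rewrite setDDl rho01E; last by rewrite finite_setU; split => //; exact: finite_set1.
move=> [i' [j' [_ iK' xq']]]; have := iK' k Ak (or_intror erefl).
have [<- _] : (i, j) = (i', j') by apply: (@x_inj a); rewrite /= xq xq'.
lia.
Qed.

Lemma rho01_partition_regular : partition_regular (Abar A) (rho01 A x).
Proof.
split; first by exists (A 0); exact: Abar_A.
split; first by move=> _ [a [K [Kfin ->]]]; apply: infinite_setD; have [_ []] := A_ad.
split.
  by move=> _ K [a [K' [K'fin ->]]] Kfin; exists a, (K' `|` K); rewrite setDDl finite_setU.
split; first by move=> E /rho01_not_conv01 nc fin; apply/nc/conv01_finite.
split; first exact: rho01_mono.
split; last by move=> E AE; exists E; split => //; split => // q; exact: rho01_removable.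
move=> G B1 B2 /rho01_not_conv01 + GB; rewrite GB => nc12.
have [nc|nc] : ~ conv01 R B1 \/ ~ conv01 R B2.
  by apply: contrapT => /not_orP[/contrapT c1 /contrapT c2]; apply/nc12/conv01U.
- by have [E AE EB] := rho01_sub_of_not_conv01 nc; exists E; split; [|left].
- by have [E AE EB] := rho01_sub_of_not_conv01 nc; exists E; split; [|right].
Qed.

Lemma I_rho01 : I_rho (Abar A) (rho01 A x) = conv01 R.
Proof.
apply/funext => B; apply/propext; split.
  move=> IB; apply: contrapT => /rho01_sub_of_not_conv01[E AE EB].
  exact: IB E AE EB.
by move=> cB E AE EB; apply: (rho01_not_conv01 AE); exact: conv01S EB cB.
Qed.

End RhoUnitInterval.

Theorem proposition6p4 (R : realType) (A : R -> set nat)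
  (x : R -> nat -> nat -> Lam) :
  almost_disjoint_family A -> enumeration_of_X x ->
  partition_regular (Abar A) (rho01 A x) /\ I_rho (Abar A) (rho01 A x) = conv01 R.
Proof.
by move=> A_ad x_enum; split; [exact: rho01_partition_regular|exact: I_rho01].
Qed.
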